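(* Assume Martin's Axiom together with the negation of the Continuum Hypothesis. Let $X$ and $Y$ be nontrivial metrizable spaces. The following are equivalent: (1) $X$ is countable; (2) $Q_p(X,\mathbb{D})$ is metrizable; (3) $Q_p(X,Y)$ is Fr\'{e}chet-Urysohn; (4) $Q_p(X,Y)$ is first countable; (5) $Q_p(X,Y)$ is metrizable; (6) $Q_p(X,Y)$ has countable tightness; (7) $Q_p(X,Y)$ has countable fan-tightness; (8) $Q_p(X,Y)$ has countable strong fan-tightness.
   Context: A function $f:X\to Y$ is quasicontinuous if for every $x\in X$, every open $V\ni f(x)$ and every open $U\ni x$ there is a nonempty open $W\subseteq U$ with $f(W)\subseteq V$. $Q_p(X,Y)$ is the set of all quasicontinuous functions $X\to Y$ with the topology of pointwise convergence; $\mathbb{D}=\{0,1\}$ is the discrete two-point space. Nontrivial means having more than one point. A space $Z$ is Fr\'{e}chet-Urysohn if for every $A\subseteq Z$ and $z\in\overline{A}$ some sequence in $A$ converges to $z$. $Z$ has countable tightness if whenever $z\in\overline{A}$ there is a countable $B\subseteq A$ with $z\in\overline{B}$; countable fan-tightness if for every $z\in Z$ and every sequence $(A_n)_{n\in\omega}$ of subsets with $z\in\bigcap_n\overline{A_n}$ there are finite $K_n\subseteq A_n$ with $z\in\overline{\bigcup_n K_n}$; countable strong fan-tightness if in the same situation there are $a_n\in A_n$ with $z\in\overline{\{a_n:n\in\omega\}}$. *)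

From HB Require Import structures.
From mathcomp Require Import all_boot all_order all_algebra.
From mathcomp Require Import all_classical all_reals all_analysis.
Set Implicit Arguments. Unset Strict Implicit. Unset Printing Implicit Defensive.
Import Order.TTheory GRing.Theory Num.Theory.
Local Open Scope classical_set_scope.
Local Open Scope ring_scope.
Local Open Scope card_scope.

(* the continuum, as the set of all subsets of nat (infinite binary sequences) *)
Definition continuum_set : set (nat -> bool) := setT.

Definition card_lt_continuum (I : Type) (A : set I) : Prop :=
  (A #<= continuum_set) /\ ~ (continuum_set #<= A).

Section Posets.
Variables (P : Type) (le : P -> P -> Prop).

Definition compatible (p q : P) : Prop := exists r, le r p /\ le r q.

Definition antichain (A : set P) : Prop :=
  forall p q, A p -> A q -> p <> q -> ~ compatible p q.

Definition ccc : Prop := forall A : set P, antichain A -> countable A.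

Definition dense_set (D : set P) : Prop := forall p, exists2 q, D q & le q p.

Definition poset_filter (G : set P) : Prop :=
  G !=set0 /\
  (forall p q, G p -> le p q -> G q) /\
  (forall p q, G p -> G q -> exists2 r, G r & le r p /\ le r q).

Definition partial_order : Prop :=
  (forall p, le p p) /\
  (forall p q r, le p q -> le q r -> le p r) /\
  (forall p q, le p q -> le q p -> p = q).
End Posets.

Definition MartinsAxiom : Prop :=
  forall (P : Type) (le : P -> P -> Prop),
    inhabited P -> partial_order le -> ccc le ->
    forall (I : Type) (D : I -> set P),
      card_lt_continuum [set: I] ->
      (forall i, dense_set le (D i)) ->
      exists G : set P, poset_filter le G /\ forall i, G `&` D i !=set0.

Definition NotCH : Prop :=
  exists A : set (nat -> bool), ~ countable A /\ ~ (continuum_set #<= A).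

Definition nontrivial (T : Type) : Prop := exists x y : T, x <> y.

Definition quasicontinuous (X Y : topologicalType) (f : X -> Y) : Prop :=
  forall (x : X) (V : set Y) (U : set X),
    open V -> V (f x) -> open U -> U x ->
    exists W : set X, [/\ open W, W !=set0, W `<=` U & f @` W `<=` V].

Definition Qp (X Y : topologicalType) : topologicalType :=
  set_type [set f : {ptws X -> Y} | quasicontinuous (f : X -> Y)].

Section TopProps.
Variable T : topologicalType.

Definition metrizable_space (R : realType) : Prop :=
  exists d : T -> T -> R,
    [/\ (forall x y, 0 <= d x y),
        (forall x y, d x y = 0 <-> x = y),
        (forall x y, d x y = d y x),
        (forall x y z, d x z <= d x y + d y z) &
        (forall x : T, nbhs x =
           filter_from [set e : R | 0 < e] (fun e => [set y | d x y < e]))].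

Definition first_countable : Prop :=
  forall x : T, exists B : nat -> set T,
    (forall n, nbhs x (B n)) /\
    (forall U, nbhs x U -> exists n, B n `<=` U).

Definition frechet_urysohn : Prop :=
  forall (A : set T) (z : T), closure A z ->
    exists u : nat -> T, (forall n, A (u n)) /\ u @ \oo --> z.

Definition countable_tightness : Prop :=
  forall (A : set T) (z : T), closure A z ->
    exists B : set T, [/\ B `<=` A, countable B & closure B z].

Definition countable_fan_tightness : Prop :=
  forall (z : T) (A : nat -> set T), (forall n, closure (A n) z) ->
    exists K : nat -> set T,
      (forall n, finite_set (K n) /\ K n `<=` A n) /\
      closure (\bigcup_n K n) z.

Definition countable_strong_fan_tightness : Prop :=
  forall (z : T) (A : nat -> set T), (forall n, closure (A n) z) ->
    exists a : nat -> T, (forall n, A n (a n)) /\ closure (range a) z.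
End TopProps.

From HB Require Import structures.
From mathcomp Require Import all_boot all_order all_algebra finmap.
From mathcomp Require Import all_classical all_reals all_analysis.
From mathcomp Require Import lra.
Set Implicit Arguments. Unset Strict Implicit. Unset Printing Implicit Defensive.
Import Order.TTheory GRing.Theory Num.Theory.
Local Open Scope classical_set_scope.
Local Open Scope ring_scope.

(* If X is countable, Q_p(X,Y) is a subspace of a countable power of a
   metrizable space, hence metrizable (by a truncated sup-metric), and
   metrizability yields all the other properties, each of which implies
   countable tightness.

   Conversely, let X be uncountable.  Countable tightness of Q_p(X,Y) fails as
   soon as there are an uncountable S, a quasicontinuous z and quasicontinuous
   h_G (G finite) such that z is matched on every finite set by some h_G while
   h_G(s) is separated from z(s) for every s in S outside G.  If X contains an
   uncountable uniformly separated set S, take z constant and let h_G switch on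
   the closure of the small balls around S \ G.  Otherwise X is separable.
   Then not-CH provides an uncountable set Z of non-isolated points of size
   less than the continuum, and Martin's Axiom, applied to finite
   approximations, yields disjoint open U, V whose closures share uncountably
   many points; take z switching on closure U and h_G switching on the points
   of closure U that lie in G or outside closure V. *)

(** * Countable tightness and its strengthenings *)

Lemma natSinv_lt (R : realType) (e : R) : 0 < e -> exists n, n.+1%:R^-1 < e.
Proof.
move=> e0; have [N _ HN] := near_infty_natSinv_lt (PosNum e0).
by exists N; apply: HN => /=.
Qed.

Lemma natSinv_le (R : realType) (n m : nat) :
  (n <= m)%N -> m.+1%:R^-1 <= n.+1%:R^-1 :> R.
Proof. by move=> nm; rewrite lef_pV2 ?posrE ?ltr0Sn // ler_nat ltnS. Qed.

Section CountableTightness.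
Variable T : topologicalType.

Lemma cvg_closure_range (u : nat -> T) (z : T) :
  u @ \oo --> z -> closure (range u) z.
Proof.
move=> uz U Uz; have [N _ HN] := uz U Uz.
by exists (u N); split; [exists N|apply: HN => /=].
Qed.

Lemma first_countable_tightness : first_countable T -> countable_tightness T.
Proof.
move=> fcT A z Az; have [B [Bz Bbase]] := fcT z.
have /choice [a Ha] : forall n, exists a, A a /\ B n a.
  by move=> n; have [a [Aa Ba]] := Az _ (Bz n); exists a.
exists (range a); split; [by move=> _ [n _ <-]; case: (Ha n)|exact: card_image_le|].
move=> U Uz; have [n BU] := Bbase U Uz.
by exists (a n); split; [exists n|apply: BU; case: (Ha n)].
Qed.

Lemma frechet_urysohn_tightness : frechet_urysohn T -> countable_tightness T.
Proof.
move=> fuT A z Az; have [u [Au uz]] := fuT A z Az.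
exists (range u); split; [by move=> _ [n _ <-]|exact: card_image_le|].
exact: cvg_closure_range.
Qed.

Lemma fan_tightness_tightness :
  countable_fan_tightness T -> countable_tightness T.
Proof.
move=> ftT A z Az; have [K [HK Kz]] := ftT z (fun _ => A) (fun _ => Az).
exists (\bigcup_n K n); split => //.
- by move=> x [n _ Kx]; case: (HK n) => _; apply.
- by apply: bigcup_countable => // n _; apply: finite_set_countable; case: (HK n).
Qed.

Lemma strong_fan_tightness_fan_tightness :
  countable_strong_fan_tightness T -> countable_fan_tightness T.
Proof.
move=> sftT z A Az; have [a [Aa az]] := sftT z A Az.
exists (fun n => [set a n]); split.
  by move=> n; split; [exact: finite_set1|move=> y ->].
move=> U Uz; have [_ [[n _ <-] Uan]] := az U Uz.
by exists (a n); split => //; exists n.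
Qed.

Variable R : realType.

Lemma metrizable_nested_nbhs_basis : metrizable_space T R ->
  forall z : T, exists B : nat -> set T, [/\ forall n, nbhs z (B n),
    forall n m, (n <= m)%N -> B m `<=` B n &
    forall U, nbhs z U -> exists n, B n `<=` U].
Proof.
move=> [d [_ _ _ _ dN]] z; exists (fun n => [set y | d z y < n.+1%:R^-1]).
split => [n|n m nm y /= dy|U].
- by rewrite dN; exists n.+1%:R^-1 => //=; rewrite invr_gt0 ltr0Sn.
- exact: lt_le_trans dy (natSinv_le _ nm).
- rewrite dN => -[e /= e0 sub]; have [n ne] := natSinv_lt e0.
  by exists n => y /= dy; apply: sub => /=; apply: lt_trans ne.
Qed.

Lemma metrizable_first_countable : metrizable_space T R -> first_countable T.
Proof.
move=> /metrizable_nested_nbhs_basis mT z.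
by have [B [Bz _ Bbase]] := mT z; exists B.
Qed.

Lemma metrizable_cvg_diagonal : metrizable_space T R ->
  forall (z : T) (A : nat -> set T), (forall n, closure (A n) z) ->
  exists u : nat -> T, (forall n, A n (u n)) /\ u @ \oo --> z.
Proof.
move=> /metrizable_nested_nbhs_basis mT z A Az.
have [B [Bz Bdecr Bbase]] := mT z.
have /choice [u Hu] : forall n, exists a, A n a /\ B n a.
  by move=> n; have [a [Aa Ba]] := Az n _ (Bz n); exists a.
exists u; split; first by move=> n; case: (Hu n).
move=> U /Bbase [N BU]; exists N => // n /= Nn.
by apply/BU/(Bdecr _ _ Nn); case: (Hu n).
Qed.

Lemma metrizable_frechet_urysohn : metrizable_space T R -> frechet_urysohn T.
Proof.
by move=> /metrizable_cvg_diagonal mT A z Az; apply: (mT z (fun _ => A)).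
Qed.

Lemma metrizable_strong_fan_tightness :
  metrizable_space T R -> countable_strong_fan_tightness T.
Proof.
move=> /metrizable_cvg_diagonal mT z A Az; have [u [Au uz]] := mT z A Az.
by exists u; split => //; exact: cvg_closure_range.
Qed.

End CountableTightness.

(** * The topology of Q_p(X, Y) *)

Lemma initial_cvgP (S : choiceType) (T : topologicalType) (f : S -> T)
    (G : set_system S) (s : S) :
  Filter G -> G --> (s : initial_topology f) <-> f @ G --> f s.
Proof.
move=> FG; split => [Gs A|Gs A].
- rewrite nbhsE => -[C [oC Cfs] CA].
  apply: (@filterS _ _ FG (f @^-1` C)); first by move=> y /CA.
  by apply: Gs; rewrite nbhsE; exists (f @^-1` C) => //; split => //; exists C.
- rewrite nbhsE => -[B [[C oC <-] Bs] BA].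
  by apply: (@filterS _ _ FG _ _ BA); apply: Gs; apply: open_nbhs_nbhs.
Qed.

Lemma ptws_cvgP (X Y : topologicalType) (G : set_system (X -> Y)) (f : X -> Y) :
  Filter G -> G --> (f : {ptws X -> Y}) <-> forall x, (fun g => g x) @ G --> f x.
Proof.
move=> FG; rewrite /= cvg_sup; split => Gf x; move: (Gf x);
  by move/(@initial_cvgP _ _ (fun g : X -> Y => g x) G f FG).
Qed.

Section QpNeighbourhoods.
Variables (X Y : topologicalType).
Implicit Types (z : Qp X Y) (G : set_system (Qp X Y)).

Lemma Qp_cvgP G z : Filter G ->
  G --> z <-> forall x, (fun g : Qp X Y => val g x) @ G --> val z x.
Proof.
move=> FG; apply: iff_trans (@initial_cvgP _ _ (@set_val _ _) G z FG) _.
exact: (@ptws_cvgP X Y _ _ (fmap_filter _ FG)).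
Qed.

Lemma Qp_eval_nbhs z (x : X) (V : set Y) :
  nbhs (val z x) V -> nbhs z [set g : Qp X Y | V (val g x)].
Proof. exact: ((Qp_cvgP z _).1 (@cvg_id _ (nbhs z)) x V). Qed.

Definition agree_filter z : set_system (Qp X Y) :=
  [set N | exists F : seq X, [set g | {in F, val g =1 val z}] `<=` N].

Lemma agree_filter_filter z : Filter (agree_filter z).
Proof.
split; first by exists [::].
- move=> A B [F1 F1A] [F2 F2B]; exists (F1 ++ F2) => g gz.
  by split; [apply: F1A|apply: F2B] => x xF; apply: gz; rewrite mem_cat xF ?orbT.
- by move=> A B AB [F FA]; exists F => g /FA /AB.
Qed.

Lemma Qp_nbhs_agree z (N : set (Qp X Y)) :
  nbhs z N -> exists F : seq X, forall g : Qp X Y, {in F, val g =1 val z} -> N g.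
Proof.
suff : agree_filter z --> z by move=> /[apply] -[F FN]; exists F => g /FN.
apply/(Qp_cvgP z (agree_filter_filter z)) => x V /nbhs_singleton Vzx.
by exists [:: x] => g /(_ x (mem_head _ _)) /= ->.
Qed.

End QpNeighbourhoods.

Lemma minr_subadd (R : realType) (a b c e : R) : 0 <= a -> 0 <= c -> 0 <= e ->
  b <= c + e -> Num.min a b <= Num.min a c + Num.min a e.
Proof.
move=> a0 c0 e0 bce; rewrite !minEle.
by case: (leP a b) => ab; case: (leP a c) => ac; case: (leP a e) => ae; lra.
Qed.

Section QpSupMetric.
Variables (R : realType) (X Y : topologicalType) (dY : Y -> Y -> R).
Hypotheses (dY_ge0 : forall y y', 0 <= dY y y')
  (dY_eq0 : forall y y', dY y y' = 0 <-> y = y')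
  (dY_sym : forall y y', dY y y' = dY y' y)
  (dY_triangle : forall y y' y'', dY y y'' <= dY y y' + dY y' y'')
  (dY_nbhs : forall y : Y,
     nbhs y = filter_from [set r : R | 0 < r] (fun r => [set y' | dY y y' < r])).
Variable e : nat -> X.
Hypothesis e_surj : forall x, exists n, e n = x.

Let trunc n (f g : Qp X Y) := Num.min n.+1%:R^-1 (dY (val f (e n)) (val g (e n))).
Let dist f g := sup (range (fun n => trunc n f g)).

Let natSinv_gt0 n : 0 < n.+1%:R^-1 :> R.
Proof. by rewrite invr_gt0 ltr0Sn. Qed.

Let trunc_ge0 n f g : 0 <= trunc n f g.
Proof. by rewrite le_min (ltW (natSinv_gt0 n)) dY_ge0. Qed.

Let trunc_le_natSinv n f g : trunc n f g <= n.+1%:R^-1.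
Proof. by rewrite ge_min lexx. Qed.

Let trunc_le_dY n f g : trunc n f g <= dY (val f (e n)) (val g (e n)).
Proof. by rewrite ge_min lexx orbT. Qed.

Let trunc_le_dist n f g : trunc n f g <= dist f g.
Proof.
apply: ub_le_sup; last by exists n.
exists 1 => _ [m _ <-]; apply: le_trans (trunc_le_natSinv m f g) _.
by rewrite invf_le1 ?ltr0Sn // ler1n.
Qed.

Let dist_le f g r : (forall n, trunc n f g <= r) -> dist f g <= r.
Proof. by move=> fgr; apply: ge_sup; [exists (trunc 0 f g), 0%N|move=> _ [n _ <-]]. Qed.

Let dist_ball_nbhs f eps : 0 < eps -> nbhs f [set g | dist f g < eps].
Proof.
move=> eps0; have eps20 : 0 < eps / 2 by rewrite divr_gt0.
have [M HM] := natSinv_lt eps20.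
(* Coordinates beyond [M] contribute at most [M.+1%:R^-1 < eps / 2]. *)
have near_first k : nbhs f [set g : Qp X Y | forall n, (n < k)%N ->
    dY (val f (e n)) (val g (e n)) < eps / 2].
  elim: k => [|k IH]; first exact: filterS filterT.
  have Vk := @Qp_eval_nbhs X Y f (e k) [set y | dY (val f (e k)) y < eps / 2].
  apply: filterS (filterI IH (Vk _)) => [g [gk g_k] n|]; last first.
    by rewrite dY_nbhs; exists (eps / 2).
  by rewrite ltnS leq_eqVlt => /orP[/eqP ->|/gk].
apply: filterS (near_first M.+1) => g gM /=.
apply: (@le_lt_trans _ _ (eps / 2)); last by rewrite ltr_pdivrMr // ltr_pMr // ltr1n.
apply: dist_le => n; case: (leqP n M) => nM.
  by apply/ltW/(le_lt_trans (trunc_le_dY n f g))/gM; rewrite ltnS.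
apply/ltW/(le_lt_trans (trunc_le_natSinv n f g))/(le_lt_trans _ HM).
exact/natSinv_le/ltnW.
Qed.

Let dist_balls_cvg f :
  filter_from [set r : R | 0 < r] (fun r => [set g | dist f g < r]) --> f.
Proof.
have FD : Filter (filter_from [set r : R | 0 < r] (fun r => [set g | dist f g < r])).
  apply: filter_from_filter; first by exists 1 => /=.
  move=> r r' r0 r'0; exists (Num.min r r'); first by rewrite /= lt_min r0 r'0.
  by move=> g /=; rewrite lt_min => /andP[].
apply/(Qp_cvgP f FD) => x V; rewrite dY_nbhs => -[r /= r0 rV].
have [n enx] := e_surj x; exists (Num.min r n.+1%:R^-1) => /=.
  by rewrite lt_min r0 natSinv_gt0.
move=> g /= fg; apply: rV => /=; rewrite -enx.
have := le_lt_trans (trunc_le_dist n f g) fg.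
rewrite /trunc lt_min !gt_min ltxx /= => /andP[/orP[wr|//] dw].
exact: lt_trans dw wr.
Qed.

Lemma Qp_sup_metrizable : metrizable_space (Qp X Y) R.
Proof.
exists dist; split.
- by move=> f g; apply: le_trans (trunc_le_dist 0 f g).
- move=> f g; split => [fg0|<-]; last first.
    apply/eqP; rewrite eq_le (le_trans (trunc_ge0 0 f f) (trunc_le_dist _ _ _)).
    rewrite andbT; apply: dist_le => n; apply: le_trans (trunc_le_dY n f f) _.
    by rewrite (dY_eq0 _ _).2.
  apply/val_inj/funext => x; have [n <-] := e_surj x; apply/dY_eq0/eqP.
  have : trunc n f g == 0 by rewrite eq_le trunc_ge0 -fg0 trunc_le_dist.
  by rewrite /trunc minEle; case: ifP => // _; rewrite (gt_eqF (natSinv_gt0 n)).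
- move=> f g; congr sup; apply/seteqP.
  by split => _ [n _ <-]; exists n => //; rewrite /trunc dY_sym.
- move=> f g h; apply: dist_le => n.
  apply: le_trans (lerD (trunc_le_dist n f g) (trunc_le_dist n g h)).
  exact/minr_subadd/dY_triangle/dY_ge0/dY_ge0/ltW.
- move=> f; apply/seteqP; split => N; first exact: dist_balls_cvg.
  by move=> [r /= r0 /filterS]; apply; exact: dist_ball_nbhs.
Qed.

End QpSupMetric.

Lemma countable_Qp_metrizable (R : realType) (X Y : topologicalType) (x0 : X) :
  countable [set: X] -> metrizable_space Y R -> metrizable_space (Qp X Y) R.
Proof.
move=> /countable_injP [f finj] [dY [dY_ge0 dY_eq0 dY_sym dY_triangle dY_nbhs]].
pose e n := xget x0 [set x | f x = n].
apply: (Qp_sup_metrizable dY_ge0 dY_eq0 dY_sym dY_triangle dY_nbhs (e := e)) => x.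
exists (f x); apply: finj; rewrite ?inE //.
exact: (@xgetI X x0 [set y | f y = f x] x).
Qed.

(** * Failure of countable tightness *)

Section QpTightnessFailure.
Variables (X Y : topologicalType).

Definition Qp_of (f : X -> Y) (fq : quasicontinuous f) : Qp X Y :=
  @exist _ _ (f : {ptws X -> Y}) (mem_set fq).

(* [z] is in the closure of the [h G], but countably many of them only involve
   countably many points of [S]; at any other point [s], [V] separates them all
   from [z]. *)
Lemma Qp_not_countable_tightness (z : X -> Y) (h : set X -> X -> Y) (S : set X) :
  quasicontinuous z -> (forall G, finite_set G -> quasicontinuous (h G)) ->
  ~ countable S ->
  (forall F : seq X, exists2 G, finite_set G & {in F, h G =1 z}) ->
  (forall s, S s -> exists2 V, nbhs (z s) V &
     forall G, finite_set G -> ~ G s -> ~ V (h G s)) ->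
  ~ countable_tightness (Qp X Y).
Proof.
move=> zq hq S_unc h_approx h_sep tightQp.
pose A := [set g : Qp X Y | exists2 G, finite_set G & val g = h G].
have zA : closure A (Qp_of zq).
  move=> N /Qp_nbhs_agree [F FN]; have [G finG hGz] := h_approx F.
  by exists (Qp_of (hq G finG)); split; [exists G|apply: FN].
have [B [BA B_cnt zB]] := tightQp A _ zA.
have /choice [Gof GofP] : forall g, exists G, B g -> finite_set G /\ val g = h G.
  move=> g; case: (pselect (B g)) => [/BA [G finG gG]|nBg]; last by exists set0.
  by exists G.
have [s [Ss sU]] : exists s, S s /\ ~ (\bigcup_(g in B) Gof g) s.
  apply/not_existsP => SU; apply: S_unc.
  apply: sub_countable (bigcup_countable (F := Gof) B_cnt _).
    by apply: subset_card_le => s Ss; move: (SU s) => /not_andP[//|/contrapT].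
  by move=> g /GofP[finG _]; apply: finite_set_countable.
have [V zV hV] := h_sep s Ss.
have [g [Bg Vg]] := zB _ (@Qp_eval_nbhs X Y (Qp_of zq) s V zV).
have [finG gG] := GofP g Bg.
by apply: (hV (Gof g) finG); [move=> Gs; apply: sU; exists g|rewrite -gG].
Qed.

Variables (y0 y1 : Y).

Definition switch (P : set X) (x : X) : Y := if `[< P x >] then y1 else y0.

Lemma switch_quasicontinuous (P : set X) :
  (forall x N, open N -> N x -> exists W, [/\ open W, W !=set0, W `<=` N &
      forall w, W w -> P w <-> P x]) -> quasicontinuous (switch P).
Proof.
move=> Ploc x V N _ Vx oN Nx; have [W [oW W0 WN WP]] := Ploc x N oN Nx.
by exists W; split => // _ [w Ww <-]; rewrite /switch (propext (WP w Ww)).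
Qed.

Lemma switch_closure_quasicontinuous (O : set X) :
  open O -> quasicontinuous (switch (closure O)).
Proof.
move=> oO; apply: switch_quasicontinuous => x N oN Nx.
case: (pselect (closure O x)) => [Ox|nOx].
  have [y [Oy Ny]] := Ox N (open_nbhs_nbhs (conj oN Nx)).
  exists (N `&` O); split; [exact: openI|by exists y|by move=> ? []|].
  by move=> w [_ Ow]; split => // _; apply: subset_closure.
exists (N `&` ~` closure O); split; [|by exists x|by move=> ? []|by move=> w []].
by apply: openI => //; rewrite openC; exact: closed_closure.
Qed.

End QpTightnessFailure.

Lemma cst_quasicontinuous (X Y : topologicalType) (y : Y) :
  quasicontinuous (fun _ : X => y).
Proof.
move=> x V N _ Vy oN Nx; exists N; split => //; first by exists x.
by move=> _ [w _ <-].
Qed.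

Section MetricBalls.
Variables (R : realType) (X : metricType R).
Implicit Types (x y : X) (r : R).

Lemma mball_open x r : open [set y | mdist x y < r].
Proof.
rewrite openE => y /= xy; apply/nbhs_ballP; exists (r - mdist x y) => /=.
  by rewrite subr_gt0.
by move=> z; rewrite ballEmdist /= => yz; have := metric_triangle x y z; lra.
Qed.

Lemma mball_nbhs x r : 0 < r -> nbhs x [set y | mdist x y < r].
Proof.
by move=> r0; apply: open_nbhs_nbhs; split; [exact: mball_open|rewrite /= mdistxx].
Qed.

Lemma nbhs_mballP x (N : set X) :
  nbhs x N <-> exists2 r, 0 < r & [set y | mdist x y < r] `<=` N.
Proof.
rewrite nbhs_ballP; split => -[r /= r0 rN]; exists r => //.
  by rewrite -ballEmdist.
by rewrite ballEmdist.
Qed.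

Lemma closure_mball_le x r y : closure [set w | mdist x w < r] y -> mdist x y <= r.
Proof.
move=> xry; rewrite leNgt; apply/negP => ry.
have ry0 : 0 < mdist x y - r by rewrite subr_gt0.
have [w [/= xw yw]] := xry _ (mball_nbhs y ry0).
by have := metric_triangle x w y; rewrite (metric_sym w y); lra.
Qed.

Definition mseparated (eps : R) (S : set X) :=
  forall a b, S a -> S b -> a <> b -> eps <= mdist a b.

Lemma maximal_mseparated (eps : R) : 0 < eps ->
  exists M : set X, mseparated eps M /\ forall x, exists2 m, M m & mdist x m < eps.
Proof.
move=> eps0.
have [M [Msep Mmax]] : exists M, mseparated eps M /\
    forall B, M `<` B -> ~ mseparated eps B.
  apply: Zorn_bigcup => F Fsep Ftot a b [A FA Aa] [B FB Bb] ab.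
  by case: (Ftot A B FA FB) => [AB|BA]; [apply: (Fsep B) => //; apply: AB|
    apply: (Fsep A) => //; apply: BA].
exists M; split => // x; apply: contrapT => xfar.
have nMx : ~ M x by move=> Mx; apply: xfar; exists x => //; rewrite mdistxx.
apply: (Mmax (M `|` [set x])).
  by split; [move=> y My; left|move=> /(_ x (or_intror erefl))].
move=> a b [Ma|->] [Mb|->] ab; first exact: Msep.
- by rewrite leNgt; apply/negP => ax; apply: xfar; exists a; rewrite // metric_sym.
- by rewrite leNgt; apply/negP => xb; apply: xfar; exists b.
- by case: ab.
Qed.

End MetricBalls.

Section SeparatedCase.
Variables (R : realType) (X : metricType R) (Y : topologicalType).
Variables (y0 y1 : Y) (O : set Y).
Hypotheses (oO : open O) (Oy0 : O y0) (nOy1 : ~ O y1).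

Lemma mseparated_not_countable_tightness (eps : R) (S : set X) :
  0 < eps -> mseparated eps S -> ~ countable S -> ~ countable_tightness (Qp X Y).
Proof.
move=> eps0 Ssep S_unc.
pose UG G := \bigcup_(s in S `\` G) [set x : X | mdist s x < eps / 3].
have oUG G : open (UG G) by apply: bigcup_open => s _; exact: mball_open.
apply: (@Qp_not_countable_tightness X Y (fun _ => y0)
  (fun G => switch y0 y1 (closure (UG G))) S (@cst_quasicontinuous X Y y0)
  (fun G _ => @switch_closure_quasicontinuous X Y y0 y1 _ (oUG G)) S_unc).
- move=> F; pose close_to x := [set s | S s /\ mdist x s < eps / 2].
  exists [set s | exists2 x, x \in F & close_to x s].
    apply: (@sub_finite_set _ _ ((fun x => xget x (close_to x)) @` [set` F])).
      move=> s [x xF [Ss xs]]; exists x => //.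
      have [Sp xp] : close_to x (xget x (close_to x)) by apply: xgetI (conj Ss xs).
      apply: contrapT => ps; have := Ssep _ _ Sp Ss ps.
      have := metric_triangle (xget x (close_to x)) x s.
      by rewrite (metric_sym _ x); lra.
    by apply: finite_image; exact: finite_seq.
  move=> x xF; rewrite /switch asboolF // => xUG.
  have e6 : 0 < eps / 6 by rewrite divr_gt0.
  have [y [[s [Ss nGs] /= sy] /= xy]] := xUG _ (mball_nbhs x e6).
  apply: nGs; exists x => //; split => //.
  by have := metric_triangle x y s; rewrite (metric_sym s y) in sy; lra.
- move=> s Ss; exists O; first exact: open_nbhs_nbhs.
  move=> G _ nGs; rewrite /switch asboolT //; apply: subset_closure.
  by exists s; [split|rewrite /= mdistxx divr_gt0].
Qed.

End SeparatedCase.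

(** * The separable case under MA and not-CH *)

Definition closure_base (T : topologicalType) (I : Type) (b : I -> set T) :=
  (forall i, open (b i)) /\
  forall x W, open W -> W x -> exists i, b i x /\ closure (b i) `<=` W.

Lemma mseparated_closure_base (R : realType) (X : metricType R) (x0 : X) :
  (forall n (S : set X), mseparated n.+1%:R^-1 S -> countable S) ->
  exists b : nat * nat -> set X, closure_base b.
Proof.
move=> sep_cnt.
have /choice [M HM] n : exists M : set X, mseparated n.+1%:R^-1 M /\
    forall x, exists2 m, M m & mdist x m < n.+1%:R^-1.
  by apply: maximal_mseparated; rewrite invr_gt0 ltr0Sn.
pose D := \bigcup_n M n.
have [f finj] : exists f : X -> nat, {in D &, injective f}.
  by apply/countable_injP/bigcup_countable => // n _; apply: sep_cnt (HM n).1.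
pose e k := xget x0 [set x | D x /\ f x = k].
have near_e n x : exists k, mdist x (e k) < n.+1%:R^-1.
  have [m Mm xm] := (HM n).2 x; exists (f m).
  have Dm : D m by exists n.
  have [De fe] : D (e (f m)) /\ f (e (f m)) = f m.
    exact: (@xgetI X x0 [set x | D x /\ f x = f m] m (conj Dm erefl)).
  by rewrite (finj (e (f m)) m) ?inE.
exists (fun kn => [set y | mdist (e kn.1) y < kn.2.+1%:R^-1]).
split => [kn|x W oW Wx]; first exact: mball_open.
have [r r0 rW] := (nbhs_mballP x W).1 (open_nbhs_nbhs (conj oW Wx)).
have [n nr] : exists n, n.+1%:R^-1 < r / 2 by apply: natSinv_lt; rewrite divr_gt0.
have [k xk] := near_e n x.
exists (k, n); split => [|y /closure_mball_le /= ky]; first by rewrite /= metric_sym.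
apply: rW; apply: le_lt_trans (metric_triangle x (e k) y) _.
by move: nr xk ky; set w := n.+1%:R^-1; lra.
Qed.

Section ClosureBase.
Variables (T : topologicalType) (I : countType) (b : I -> set T).
Hypothesis bbase : closure_base b.

Lemma closure_base_countable_isolated :
  countable [set x : T | exists2 N, nbhs x N & finite_set N].
Proof.
apply: (@sub_countable _ _ _ (\bigcup_(i in [set i | finite_set (b i)]) b i)).
  apply: subset_card_le => x [N]; rewrite nbhsE => -[W [oW Wx] WN] finN.
  have [i [bix biW]] := bbase.2 x W oW Wx.
  exists i => //; apply: sub_finite_set finN => y /subset_closure /biW; exact: WN.
by apply: bigcup_countable => // i finb; exact: finite_set_countable.
Qed.

Definition base_code (x : T) (n : nat) : bool :=
  if choice.unpickle n is Some i then `[< b i x >] else false.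

Lemma base_code_inj : accessible_space T -> injective base_code.
Proof.
move=> T1 x y cxy; apply: contrapT => /eqP /T1 [W [oW /set_mem Wx /set_mem nWy]].
have [i [bix biW]] := bbase.2 x W oW Wx.
have := congr1 (fun c => c (choice.pickle i)) cxy.
rewrite /base_code choice.pickleK asboolT // => /esym /asboolP biy.
exact/nWy/biW/subset_closure.
Qed.

End ClosureBase.

Local Open Scope card_scope.

Lemma NotCH_small_uncountable (T : Type) (A : set T) (code : T -> nat -> bool) :
  NotCH -> injective code -> ~ countable A ->
  exists2 Z, Z `<=` A & ~ countable Z /\ card_lt_continuum Z.
Proof.
move=> [C [C_unc C_small]] code_inj A_unc.
have [cA|ncA] := pselect (continuum_set #<= A); last first.
  exists A => //; split => //; split => //.
  rewrite -(card_le_eql (inj_card_eq (in2W code_inj))).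
  exact: subset_card_le.
have /card_subP [Z ZC ZA] : C #<= A.
  by apply: card_le_trans cA; exact: subset_card_le.
exists Z => //; rewrite card_eq_le in ZC; have /andP[ZleC CleZ] := ZC.
split; first by move=> /(sub_countable CleZ).
split; first by apply: card_le_trans ZleC _; exact: subset_card_le.
by move=> /card_le_trans /(_ ZleC).
Qed.

Lemma card_lt_continuum_setT (T : Type) (Z : set T) :
  card_lt_continuum Z -> card_lt_continuum [set: set_type Z].
Proof.
by rewrite /card_lt_continuum (card_le_eql (card_setT Z)) (card_le_eqr (card_setT Z)).
Qed.

Lemma uncountable_surj (T : Type) (Z : set T) (K : countType) (k0 : K) :
  ~ countable Z -> exists psi : T -> K, forall k : K, exists2 z, Z z & psi z = k.
Proof.
move=> Z_unc; have /infiniteP /pcard_surjP [g gsurj] : infinite_set Z.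
  by move=> /finite_set_countable.
exists (fun z => odflt k0 (choice.unpickle (g z))) => k.
by have [z Zz gz] := gsurj (choice.pickle k) I; exists z; rewrite // gz choice.pickleK.
Qed.

Section Forcing.
Variables (T : topologicalType) (I : countType) (b : I -> set T).
Hypotheses (bbase : closure_base b) (T1 : accessible_space T).
Variable Z : set T.
Hypothesis Z_nonisolated : forall z, Z z -> forall N, nbhs z N -> infinite_set N.

Lemma base_avoiding (W P : set T) : open W -> W !=set0 -> finite_set P ->
  P `<=` Z -> exists i, b i !=set0 /\ closure (b i) `<=` W `\` P.
Proof.
move=> oW [x Wx] finP PZ.
have [y [Wy nPy]] : exists y, W y /\ ~ P y.
  apply: contrapT => WP; have {}WP : W `<=` P.
    by move=> y Wy; apply: contrapT => nPy; apply: WP; exists y.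
  apply: (Z_nonisolated (PZ x (WP x Wx)) (open_nbhs_nbhs (conj oW Wx))).
  exact: sub_finite_set finP.
have oWP : open (W `\` P).
  apply: openI => //; rewrite openC.
  exact: (@accessible_finite_set_closed T).1 T1 _ finP.
have [i [biy biWP]] := bbase.2 y _ oWP (conj Wy nPy).
by exists i; split => //; exists y.
Qed.

Local Notation triple := (nat * I * bool)%type.

(* A condition [(s, F)] is a finite approximation of open sets [U n c]:
   [(n, i, c) \in s] puts [b i] into [U n c], and [(z, n) \in F] promises that
   [z] will lie in the closure of both [U n c] without lying in the closure of
   any single [b i] put into them. *)
Definition forcing_valid (p : {fset triple} * {fset T * nat}) : Prop :=
  [/\ forall n i j c, (n, i, c) \in p.1 -> (n, j, ~~ c) \in p.1 ->
        b i `&` b j = set0,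
      forall z n i c, (z, n) \in p.2 -> (n, i, c) \in p.1 -> ~ closure (b i) z &
      forall z n, (z, n) \in p.2 -> Z z].

Definition forcing_condition := {p | forcing_valid p}.

Definition forcing_le (q p : forcing_condition) : Prop :=
  fsubset (sval p).1 (sval q).1 /\ fsubset (sval p).2 (sval q).2.

Lemma forcing_le_order : partial_order forcing_le.
Proof.
split; first by move=> p; split; exact: fsubset_refl.
split=> [p q r [pq1 pq2] [qr1 qr2]|].
  by split; [exact: fsubset_trans qr1 pq1|exact: fsubset_trans qr2 pq2].
move=> [[s F] vp] [[s' F'] vq] [/= ss' FF'] [/= s's F'F].
apply: eq_exist; have -> : s = s' by apply/eqP; rewrite eqEfsubset s's ss'.
by have -> // : F = F' by apply/eqP; rewrite eqEfsubset F'F FF'.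
Qed.

Lemma forcing_inhabited : inhabited forcing_condition.
Proof.
apply: inhabits (@exist _ _ (fset0, fset0) _).
by split => /= [n i j c|z n i c|z n]; rewrite in_fset0.
Qed.

(* Conditions with the same first component are compatible, and there are only
   countably many first components. *)
Lemma forcing_ccc : ccc forcing_le.
Proof.
move=> A Aanti; apply/countable_injP; exists (fun p => choice.pickle (sval p).1).
move=> [[s F] [v1 v2 v3]] [[s' F'] [w1 w2 w3]] /set_mem Ap /set_mem Aq.
move=> /(pcan_inj (@choice.pickleK _)) /= ss'; subst s'.
apply: contrapT => pq; apply: (Aanti _ _ Ap Aq pq).
have v : forcing_valid (s, (F `|` F')%fset).
  split => //= [z n i c|z n]; rewrite in_fsetU => /orP[] zF;
    by [exact: v2 zF|exact: w2 zF|exact: v3 zF|exact: w3 zF].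
exists (exist _ _ v); split; split => /=;
  by [exact: fsubset_refl|exact: fsubsetUl|exact: fsubsetUr].
Qed.

Definition E_set (z : T) : set forcing_condition :=
  [set p : forcing_condition | exists n, (z, n) \in (sval p).2].

Definition D_set (t : triple) : set forcing_condition :=
  let: (n, k, c) := t in
  [set p : forcing_condition |
    (exists2 i, (n, i, c) \in (sval p).1 & b i `&` b k !=set0) \/
    forall x, b k x -> exists2 i, (n, i, ~~ c) \in (sval p).1 & closure (b i) x].

Lemma D_set_up t p q : D_set t p -> forcing_le q p -> D_set t q.
Proof.
case: t => [[n k] c] [[i ip bik]|Dp] [/fsubsetP pq _].
  by left; exists i => //; apply: pq.
by right => x /Dp [i ip bix]; exists i => //; apply: pq.
Qed.

Lemma E_dense z : Z z -> dense_set forcing_le (E_set z).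
Proof.
move=> Zz [[s F] [v1 v2 v3]].
have [n ns] : exists n, ~ [set t.1.1 | t in [set` s]] n.
  apply/not_existsP => sn; apply: infinite_nat.
  apply: sub_finite_set (finite_image (fun t : triple => t.1.1) (finite_fset s)).
  by move=> n _; apply: contrapT; apply: sn.
have v : forcing_valid (s, (F `|` [fset (z, n)])%fset).
  split => //= [z' n' i c|z' n']; rewrite in_fsetU in_fset1.
    by move=> /orP[zF|/eqP[_ ->] ins]; [exact: v2 zF|case: ns; exists (n, i, c)].
  by move=> /orP[zF|/eqP[-> _]]; [exact: v3 zF|].
exists (exist _ _ v); first by exists n; rewrite /= in_fsetU in_fset1 eqxx orbT.
by split => /=; [exact: fsubset_refl|exact: fsubsetUl].
Qed.

Lemma forcing_valid_add (s : {fset triple}) F n i c : forcing_valid (s, F) ->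
  (forall j, (n, j, ~~ c) \in s -> b i `&` b j = set0) ->
  (forall z, (z, n) \in F -> ~ closure (b i) z) ->
  forcing_valid ((s `|` [fset (n, i, c)])%fset, F).
Proof.
move=> [v1 v2 v3] bi_disj bi_far; split => //= [n1 i1 j1 c1|z n1 i1 c1 zF].
  rewrite !in_fsetU !in_fset1.
  case/orP=> [i1s|/eqP[-> -> ->]].
    case/orP=> [j1s|/eqP[n1n j1i c1c]]; first exact: v1 i1s j1s.
    have c1E : c1 = ~~ c by rewrite -c1c negbK.
    move: i1s; rewrite n1n j1i c1E => i1s.
    by rewrite setIC; apply: bi_disj.
  case/orP=> [j1s|/eqP[_ c_negc]]; first exact: bi_disj.
  by move: c_negc; case: (c).
rewrite in_fsetU in_fset1 => /orP[|/eqP[n1n -> _]]; first exact: v2 zF.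
by apply: bi_far; rewrite -n1n.
Qed.

Lemma D_dense t : dense_set forcing_le (D_set t).
Proof.
move: t => [[n k] c] [[s F] [v1 v2 v3]].
have [Dp|] := pselect (forall x, b k x ->
  exists2 i, (n, i, ~~ c) \in s & closure (b i) x).
  exists (@exist _ forcing_valid (s, F) (And3 v1 v2 v3)); first by right.
  by split; exact: fsubset_refl.
move=> nDp; have [x [bkx xfar]] : exists x, b k x /\
    forall i, (n, i, ~~ c) \in s -> ~ closure (b i) x.
  apply: contrapT => allnear; apply: nDp => x bkx; apply: contrapT => xfar.
  by apply: allnear; exists x; split => // i ins cix; apply: xfar; exists i.
pose W := b k `&` [set y | forall j, (n, j, ~~ c) \in s -> ~ closure (b j) y].
have : nbhs x W.
  apply: filterI; first exact: open_nbhs_nbhs (conj (bbase.1 k) bkx).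
  pose far_set (t : triple) :=
    [set y | t.1.1 = n -> t.2 = ~~ c -> ~ closure (b t.1.2) y].
  have far t : t \in s -> nbhs x (far_set t).
    move: t => [[n' j] c'] js /=.
    have [[n'n c'c]|nt] := pselect (n' = n /\ c' = ~~ c); last first.
      by apply: filterS filterT => y _ n'n c'c; case: nt.
    subst n' c'; apply: filterS (_ : nbhs x (~` closure (b j))).
      by move=> y ? _ _.
    apply: open_nbhs_nbhs; split; last exact: xfar js.
    by rewrite openC; exact: closed_closure.
  apply: filterS (filter_bigI (nbhs_filter x) far) => y yfar j js.
  exact: (yfar (n, j, ~~ c) js).
rewrite nbhsE => -[W0 [oW0 W0x] W0W].
have [|i [[y biy] biW0]] := base_avoiding oW0 (ex_intro _ x W0x)
  (finite_image fst (finite_fset F)).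
  by move=> _ [[z n'] zF <-]; exact: v3 zF.
have biW y' : b i y' -> W y' by move=> /subset_closure /biW0 [/W0W].
have v : forcing_valid ((s `|` [fset (n, i, c)])%fset, F).
  apply: forcing_valid_add => // [j js|z zF /biW0 [_]]; last by apply; exists (z, n).
  apply/seteqP; split => // y' [/biW [_ Wy'] bjy'].
  by apply: (Wy' j js); exact: subset_closure.
exists (exist _ _ v); last by split => /=; [exact: fsubsetUl|exact: fsubset_refl].
left; exists i; first by rewrite /= in_fsetU in_fset1 eqxx orbT.
by exists y; split => //; have [] := biW y biy.
Qed.

Lemma ED_dense z t : Z z -> dense_set forcing_le (E_set z `&` D_set t).
Proof.
move=> Zz p; have [q Dq qp] := D_dense t p; have [r Er rq] := E_dense Zz q.
exists r; first by split => //; exact: D_set_up Dq rq.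
by have [_ [le_trans _]] := forcing_le_order; exact: le_trans rq qp.
Qed.

Lemma MA_disjoint_opens : MartinsAxiom ->
  card_lt_continuum [set: set_type Z] -> ~ countable Z ->
  exists U V : set T,
    [/\ open U, open V, U `&` V = set0 & ~ countable (closure U `&` closure V)].
Proof.
move=> MA Z_small Z_unc.
have [z0 Zz0] : Z !=set0 by apply/set0P/eqP => Z0; apply: Z_unc; rewrite Z0.
have [i0 _] := bbase.2 z0 setT openT Logic.I.
have [psi psi_surj] := uncountable_surj (0%N, i0, false) Z_unc.
have [G [[_ [_ Gdir]] GED]] := MA _ _ forcing_inhabited forcing_le_order forcing_ccc
  _ (fun z : set_type Z => E_set (val z) `&` D_set (psi (val z))) Z_small
  (fun z => ED_dense (psi (val z)) (set_valP z)).
pose U n c := \bigcup_(i in [set i | exists2 p, G p & (n, i, c) \in (sval p).1]) b i.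
have oU n c : open (U n c) by apply: bigcup_open => i _; exact: bbase.1.
have U_disj n : U n false `&` U n true = set0.
  apply/seteqP; split => // x [[i [p Gp ip] bix] [j [q Gq jq] bjx]].
  have [r _ [[rp _] [rq _]]] := Gdir p q Gp Gq; have [r_disj _ _] := svalP r.
  have := r_disj n i j false (fsubsetP rp _ ip) (fsubsetP rq _ jq).
  by move/seteqP => [/(_ x (conj bix bjx))].
(* A promised point [z] avoids the closure of every single piece of [U n c],
   so the second alternative of [D_set] fails at every basic neighbourhood. *)
have U_cl n c z p : G p -> (z, n) \in (sval p).2 -> closure (U n c) z.
  move=> Gp zp N; rewrite nbhsE => -[W [oW Wz] WN].
  have [k [bkz bkW]] := bbase.2 z W oW Wz.
  have [z' Zz' psik] := psi_surj (n, k, c).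
  have [q [Gq [_ Dq]]] := GED (@exist _ _ z' (mem_set Zz')).
  rewrite /= psik in Dq.
  case: Dq => [[i iq [y [biy bky]]]|Dq].
    by exists y; split; [exists i => //; exists q|apply/WN/bkW/subset_closure].
  have [i iq ciz] := Dq z bkz.
  have [r _ [[_ rp] [rq _]]] := Gdir p q Gp Gq; have [_ r_far _] := svalP r.
  by case: (r_far z n i (~~ c) (fsubsetP rp _ zp) (fsubsetP rq _ iq)).
have [n Un_unc] : exists n, ~ countable (closure (U n false) `&` closure (U n true)).
  apply/not_existsP => Un_cnt; apply: Z_unc.
  apply: (@sub_countable _ _ _
    (\bigcup_n (closure (U n false) `&` closure (U n true)))).
    apply: subset_card_le => z Zz.
    have [q [Gq [[n zq] _]]] := GED (@exist _ _ z (mem_set Zz)).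
    by exists n => //; split; exact: (U_cl n _ z q Gq zq).
  apply: bigcup_countable => [|n _]; first exact: countableP.
  by apply: contrapT; exact: Un_cnt.
by exists (U n false), (U n true).
Qed.

End Forcing.

Section DisjointOpensCase.
Variables (X Y : topologicalType) (y0 y1 : Y) (O : set Y).
Hypotheses (oO : open O) (Oy1 : O y1) (nOy0 : ~ O y0).
Variables (U V : set X).
Hypotheses (oU : open U) (oV : open V) (UV : U `&` V = set0).

Let open_disjoint_closure (A B : set X) (x : X) :
  open A -> A `&` B = set0 -> A x -> ~ closure B x.
Proof.
move=> oA AB Ax /(_ A (open_nbhs_nbhs (conj oA Ax))) [y [By Ay]].
by have : (A `&` B) y by []; rewrite AB.
Qed.

Let boundary_part (G : set X) (x : X) := closure U x /\ (G x \/ ~ closure V x).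

Let boundary_part_quasicontinuous G :
  quasicontinuous (switch y0 y1 (boundary_part G)).
Proof.
apply: switch_quasicontinuous => x N oN Nx.
have xN := open_nbhs_nbhs (conj oN Nx).
have [Bx|nBx] := pselect (boundary_part G x).
  have [y [Uy Ny]] := Bx.1 N xN.
  exists (N `&` U); split; [exact: openI|by exists y|by move=> ? []|].
  move=> w [_ Uw]; split => // _; split; first exact: subset_closure.
  by right; apply: open_disjoint_closure Uw.
have [cUx|ncUx] := pselect (closure U x).
  have cVx : closure V x by apply: contrapT => ncVx; apply: nBx; split => //; right.
  have [y [Vy Ny]] := cVx N xN.
  exists (N `&` V); split; [exact: openI|by exists y|by move=> ? []|].
  move=> w [_ Vw]; split => // -[cUw _].
  have VU : V `&` U = set0 by rewrite setIC.
  by case: (open_disjoint_closure oV VU Vw cUw).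
exists (N `&` ~` closure U); split; [|by exists x|by move=> ? []|].
  by apply: openI => //; rewrite openC; exact: closed_closure.
by move=> w [_ ?]; split => -[].
Qed.

Lemma disjoint_opens_not_countable_tightness :
  ~ countable (closure U `&` closure V) -> ~ countable_tightness (Qp X Y).
Proof.
move=> UV_unc.
apply: (@Qp_not_countable_tightness X Y (switch y0 y1 (closure U))
  (fun G => switch y0 y1 (boundary_part G)) _
  (@switch_closure_quasicontinuous X Y y0 y1 U oU)
  (fun G _ => @boundary_part_quasicontinuous G) UV_unc).
- move=> F; exists [set` F]; first exact: finite_seq.
  move=> x xF; rewrite /switch; congr (if _ then _ else _).
  by apply/asboolP/asboolP => [[]//|cUx]; split => //; left.
- move=> s [cUs cVs]; exists O.
    by apply: open_nbhs_nbhs; split; rewrite // /switch asboolT.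
  by move=> G _ nGs; rewrite /switch asboolF // => -[_ [//|/(_ cVs)]].
Qed.

End DisjointOpensCase.

Lemma countable_setU (T : Type) (A B : set T) :
  countable A -> countable B -> countable (A `|` B).
Proof.
move=> cA cB; rewrite -bigcup2inE.
by apply: bigcup_countable => // -[|[|]].
Qed.

Lemma closure_base_not_countable_tightness (X Y : topologicalType) (I : countType)
    (b : I -> set X) (y0 y1 : Y) (O : set Y) :
  MartinsAxiom -> NotCH -> closure_base b -> accessible_space X ->
  open O -> O y1 -> ~ O y0 ->
  ~ countable [set: X] -> ~ countable_tightness (Qp X Y).
Proof.
move=> MA nCH bbase T1 oO Oy1 nOy0 X_unc.
pose isolated := [set x : X | exists2 N, nbhs x N & finite_set N].
have nonisolated_unc : ~ countable (~` isolated).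
  move=> cnt; apply: X_unc; rewrite -(setUv isolated) setUC.
  exact: countable_setU cnt (closure_base_countable_isolated bbase).
have [Z Z_noniso [Z_unc Z_small]] :=
  NotCH_small_uncountable nCH (base_code_inj bbase T1) nonisolated_unc.
have Z_nonisolated z : Z z -> forall N, nbhs z N -> infinite_set N.
  by move=> Zz N zN finN; apply: (Z_noniso z Zz); exists N.
have [U [V [oU oV UV UV_unc]]] :=
  MA_disjoint_opens bbase T1 Z_nonisolated MA (card_lt_continuum_setT Z_small) Z_unc.
exact: (disjoint_opens_not_countable_tightness oO Oy1 nOy0 oU oV UV UV_unc).
Qed.

Lemma Qp_countable_tightness_countable (R : realType) (X : metricType R)
    (Y : topologicalType) :
  MartinsAxiom -> NotCH -> accessible_space Y -> nontrivial Y ->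
  countable_tightness (Qp X Y) -> countable [set: X].
Proof.
move=> MA nCH T1Y [y0 [y1 /eqP y01]] tightQp; apply: contrapT => X_unc.
have [V0 [oV0 /set_mem V0y0 /set_mem nV0y1]] := T1Y _ _ y01.
have [V1 [oV1 /set_mem V1y1 /set_mem nV1y0]] := T1Y y1 y0 (ltac:(by rewrite eq_sym)).
have [[n [S [Ssep S_unc]]]|sep_cnt] :=
  pselect (exists n (S : set X), mseparated n.+1%:R^-1 S /\ ~ countable S).
  by apply: (mseparated_not_countable_tightness oV0 V0y0 nV0y1 _ Ssep S_unc);
    rewrite ?invr_gt0 ?ltr0Sn.
have [x0 _] : [set: X] !=set0 by apply/set0P/eqP => X0; apply: X_unc; rewrite X0.
have [b bbase] : exists b : nat * nat -> set X, closure_base b.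
  apply: (mseparated_closure_base x0) => n S Ssep.
  by apply: contrapT => S_unc; apply: sep_cnt; exists n, S.
by apply: (closure_base_not_countable_tightness MA nCH bbase
  (hausdorff_accessible (@metric_hausdorff R X)) oV1 V1y1 nV1y0 X_unc).
Qed.

Lemma metric_metrizable (R : realType) (Y : metricType R) : metrizable_space Y R.
Proof.
exists (@mdist R Y); split => [||||y]; [exact: mdist_ge0| |exact: metric_sym|
  exact: metric_triangle|].
  by move=> y y'; split => [/mdist_positivity //|->]; exact: mdistxx.
by apply/seteqP; split => N /nbhs_mballP.
Qed.

Lemma bool_metrizable (R : realType) : metrizable_space bool R.
Proof.
exists (fun a b : bool => if a == b then 0 else 1 : R); split.
- by move=> a b; case: eqP.
- by move=> a b; split; case: eqP => // _ /eqP; rewrite oner_eq0.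
- by move=> a b; rewrite eq_sym.
- by case; case; case => /=; lra.
- move=> a; apply/seteqP; split => N.
    move=> /principal_filterP Na; exists 1 => //= c.
    by rewrite /=; case: (a =P c) => [<-//|_]; rewrite ltxx.
  by move=> [e /= e0 eN]; apply/principal_filterP/eN; rewrite /= eqxx.
Qed.

Theorem corollary7p3 :
  MartinsAxiom -> NotCH ->
  forall (R : realType) (X Y : metricType R),
    nontrivial X -> nontrivial Y ->
    [<-> countable [set: X];
         metrizable_space (Qp X bool) R;
         frechet_urysohn (Qp X Y);
         first_countable (Qp X Y);
         metrizable_space (Qp X Y) R;
         countable_tightness (Qp X Y);
         countable_fan_tightness (Qp X Y);
         countable_strong_fan_tightness (Qp X Y)].
Proof.
move=> MA nCH R X Y [x0 _] Y_nontriv.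
have tightY := Qp_countable_tightness_countable MA nCH
  (hausdorff_accessible (@metric_hausdorff R Y)) Y_nontriv (X := X).
have bool_nontriv : nontrivial bool by exists false, true.
have tightB := Qp_countable_tightness_countable MA nCH
  (hausdorff_accessible (@discrete_hausdorff bool)) bool_nontriv (X := X).
have metY := fun X_cnt => countable_Qp_metrizable x0 X_cnt (metric_metrizable Y).
have metB := fun X_cnt => countable_Qp_metrizable x0 X_cnt (bool_metrizable R).
tfae.
- exact: metB.
- by move=> /metrizable_first_countable /first_countable_tightness /tightB /metY
    /metrizable_frechet_urysohn.
- by move=> /frechet_urysohn_tightness /tightY /metY /metrizable_first_countable.
- by move=> /first_countable_tightness /tightY /metY.
- by move=> /metrizable_first_countable /first_countable_tightness.
- by move=> /tightY /metY /metrizable_strong_fan_tightness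
    /strong_fan_tightness_fan_tightness.
- by move=> /fan_tightness_tightness /tightY /metY /metrizable_strong_fan_tightness.
- by move=> /strong_fan_tightness_fan_tightness /fan_tightness_tightness /tightY.
Qed.
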